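(* Let $f$ be a probability density on $\mathbb{R}$ with unit second moment which is $g$-concentrated (with error functions $\lambda_n$). Suppose there exist $a_1,a_2,C_1,C_2>0$ with $C_1e^{-a_1v^2}\le f(v)\le C_2e^{a_2v^2}$ for all $v\in\mathbb{R}$. Then the family of conditioned tensorisations $F_N$ of $f$ is log-scalable with constant $$C_F=\max\{|\log C_1|,|\log C_2|\}+\max\{a_1,a_2\}+\sup_{N}\left|\frac{\log\left(2(2\pi)^{-1/2}+2\lambda_N(N)\right)}{N}-\frac{\log N}{2N}-\frac{\log\left(|\mathbb{S}^{N-1}|N^{\frac{N-2}{2}}\right)}{N}\right|,$$ and this supremum is finite.
   Context: $\mathbb{S}^{N-1}(r)$ is the sphere of radius $r$ in $\mathbb{R}^N$ with uniform probability measure $d\sigma^N_r$; $|\mathbb{S}^{n-1}|$ is the surface area of the unit sphere in $\mathbb{R}^n$. For a probability density $f$ on $\mathbb{R}$ with unit second moment, $\mathcal{Z}_N(f,r)=\int_{\mathbb{S}^{N-1}(r)}f^{\otimes N}d\sigma^N_r$ and the conditioned tensorisation is $F_N=f^{\otimes N}/\mathcal{Z}_N(f,\sqrt N)$ (a density w.r.t. $d\sigma^N_{\sqrt N}$). $f$ is $g$-concentrated if $\mathcal{Z}_N$ is well defined and for each fixed $k$, $\mathcal{Z}_{N-k}(f,\sqrt u)=\frac{2}{(N-k)^{1/2}|\mathbb{S}^{N-k-1}|u^{(N-k-2)/2}}\left(g(u-(N-k),N-k)+\lambda_{N-k}(u)\right)$, where $g$ is non-negative and bounded, $g(0,N)=(2\pi)^{-1/2}$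 for all $N$, $\lim_{N\to\infty}\sup_u|\lambda_N(u)|=0$, and for every $R>0$, $\lim_{N\to\infty}\sup_{|x|<R}|g(x,N)-(2\pi)^{-1/2}|=0$. A family $\{F_N\}$ is log-scalable with constant $C_F>0$ (independent of $N$) if $\sup_{\bm v\in\mathbb{S}^{N-1}(\sqrt N)}|\log F_N(\bm v)|\le C_FN$ for all $N$. *)

From HB Require Import structures.
From mathcomp Require Import all_boot all_order all_algebra.
From mathcomp Require Import all_classical all_reals all_analysis.
Set Implicit Arguments. Unset Strict Implicit. Unset Printing Implicit Defensive.
Import Order.TTheory GRing.Theory Num.Theory.
Import numFieldNormedType.Exports.
Local Open Scope classical_set_scope.
Local Open Scope ring_scope.

Section Defs.
Variable R : realType.

Definition vcons (n : nat) (x : R) (w : 'I_n -> R) : 'I_n.+1 -> R :=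
  fun i => if unlift ord0 i is Some j then w j else x.

(* Lebesgue integral over R^n of a nonnegative extended-real function,
   computed as an iterated integral (Tonelli). *)
Fixpoint iterint (n : nat) : (('I_n -> R) -> \bar R) -> \bar R :=
  match n return (('I_n -> R) -> \bar R) -> \bar R with
  | 0 => fun h => h (fun _ => 0)
  | m.+1 => fun h =>
      (\int[@lebesgue_measure R]_(x in setT) iterint (fun w => h (vcons x w)))%E
  end.

Definition enorm (n : nat) (x : 'I_n -> R) : R := Num.sqrt (\sum_(i < n) x i ^+ 2).

Definition ball_vol (n : nat) : \bar R :=
  iterint (fun x : 'I_n -> R => (if enorm x <= 1 then 1 else 0 : R)%:E).

(* |S^{n-1}| : surface area of the unit sphere in R^n (= n |B^n|) *)
Definition sphere_area (n : nat) : R := n%:R * fine (ball_vol n).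

(* Integral of a nonnegative h w.r.t. the uniform probability measure
   d sigma^n_r on S^{n-1}(r), defined as the normalized cone measure:
   int h d sigma_r = |B^n|^{-1} int_{|x|<=1} h (r x/|x|) dx. *)
Definition sphere_int (n : nat) (r : R) (h : ('I_n -> R) -> R) : \bar R :=
  (iterint (fun x : 'I_n -> R =>
     ((if enorm x <= 1 then 1 else 0 : R) * h (fun i => r * x i / enorm x))%:E)
   * ((fine (ball_vol n))^-1)%:E)%E.

Definition Zn (n : nat) (f : R -> R) (r : R) : \bar R :=
  sphere_int r (fun v : 'I_n -> R => \prod_(i < n) f (v i)).

Definition cond_tensor (f : R -> R) (N : nat) (v : 'I_N -> R) : R :=
  (\prod_(i < N) f (v i)) / fine (Zn N f (Num.sqrt N%:R)).

Definition prob_density_unit2 (f : R -> R) : Prop :=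
  [/\ measurable_fun setT f, (forall x, 0 <= f x),
      (\int[@lebesgue_measure R]_(x in setT) (f x)%:E = 1)%E &
      (\int[@lebesgue_measure R]_(x in setT) (x ^+ 2 * f x)%:E = 1)%E].

Definition g_concentrated (f : R -> R) (g : R -> nat -> R) (lam : nat -> R -> R)
  : Prop :=
  (forall n r, (0 < n)%N -> 0 < r -> Zn n f r \is a fin_num) /\
  [/\ (forall n u, (0 < n)%N -> 0 < u ->
         Zn n f (Num.sqrt u) =
         ((2 / (Num.sqrt n%:R * sphere_area n * u `^ ((n%:R - 2) / 2)))
            * (g (u - n%:R) n + lam n u))%:E),
      (exists M, forall x n, 0 <= g x n <= M),
      (forall n, g 0 n = (Num.sqrt (2 * pi))^-1),
      (forall e, 0 < e -> exists N0, forall n u, (N0 <= n)%N -> 0 < u ->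
         `|lam n u| <= e) &
      (forall Rad, 0 < Rad -> forall e, 0 < e -> exists N0, forall n x,
         (N0 <= n)%N -> `|x| < Rad -> `|g x n - (Num.sqrt (2 * pi))^-1| <= e)].

Definition log_scalable (F : forall N : nat, ('I_N -> R) -> R) (C : R) : Prop :=
  0 < C /\ forall N (v : 'I_N -> R), (0 < N)%N ->
    \sum_(i < N) v i ^+ 2 = N%:R -> `|ln (F N v)| <= C * N%:R.

Definition CF_term (lam : nat -> R -> R) (N : nat) : R :=
  ln (2 * (Num.sqrt (2 * pi))^-1 + 2 * lam N N%:R) / N%:R
  - ln N%:R / (2 * N%:R)
  - ln (sphere_area N * N%:R `^ ((N%:R - 2) / 2)) / N%:R.

Definition CF_set (lam : nat -> R -> R) : set R :=
  [set `|CF_term lam N| | N in [set N : nat | (0 < N)%N]].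

End Defs.

From HB Require Import structures.
From mathcomp Require Import all_boot all_order all_algebra.
From mathcomp Require Import all_classical all_reals all_analysis.
From mathcomp Require Import ring lra.
Import Order.TTheory GRing.Theory Num.Theory.
Import numFieldNormedType.Exports.
Local Open Scope classical_set_scope.
Local Open Scope ring_scope.
Import HBNNSimple.
Set Implicit Arguments. Unset Strict Implicit.

(* On the sphere of radius [sqrt N] the Gaussian bounds on [f] squeeze the
   tensor product: [C1^N e^{-a1 N} <= f^{(x)N} <= C2^N e^{a2 N}], so
   [|ln f^{(x)N}| <= (max |ln C_i| + max a_i) N].  As a spherical average,
   [Z_N(f, sqrt N)] obeys the same bounds; on the other hand the concentration
   formula at [u = N], where [g(0, N) = (2 pi)^{-1/2}], says that
   [ln Z_N(f, sqrt N) / N] is exactly the [N]-th term of the supremum.  Hence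
   the supremum is finite, and [ln F_N = ln f^{(x)N} - ln Z_N] is at most
   [C_F N] in absolute value. *)

Section nonneg_integralT.
Local Open Scope ereal_scope.
Context d (T : measurableType d) (R : realType).
Variable mu : {measure set T -> \bar R}.

(* The integrands built by [iterint] are not known to be measurable, so the
   library's monotonicity and scaling lemmas do not apply; both facts are
   proved directly from the definition as a supremum of simple integrals. *)
Lemma ge0_le_integralT (F G : T -> \bar R) : (forall x, 0 <= F x) ->
  (forall x, F x <= G x) ->
  \int[mu]_(x in setT) F x <= \int[mu]_(x in setT) G x.
Proof.
move=> F0 FG; have G0 x : 0 <= G x by exact: le_trans (F0 x) (FG x).
rewrite !ge0_integralTE//; apply: ge_ereal_sup => _ [h hF <-].
by apply: ereal_sup_ubound; exists h => // x; exact: le_trans (hF x) (FG x).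
Qed.

Lemma ge0_integralZlT_le (k : R) (F : T -> \bar R) : (0 < k)%R ->
  (forall x, 0 <= F x) ->
  \int[mu]_(x in setT) (k%:E * F x) <= k%:E * \int[mu]_(x in setT) F x.
Proof.
move=> k0 F0; have kF0 x : 0 <= k%:E * F x by rewrite mule_ge0// lee_fin ltW.
rewrite !ge0_integralTE//; apply: ge_ereal_sup => _ [h hF <-].
have ki0 : (0 <= k^-1)%R by rewrite invr_ge0 ltW.
pose h' := scale_nnsfun h ki0.
have -> : sintegral mu h = k%:E * sintegral mu h'.
  by rewrite /h' sintegralrM muleA -EFinM divff ?gt_eqF// mul1e.
apply: lee_wpmul2l; first by rewrite lee_fin ltW.
apply: ereal_sup_ubound; exists h' => // x /=.
rewrite EFinM; apply: (le_trans (lee_wpmul2l _ (hF x))); first by rewrite lee_fin.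
by rewrite muleA -EFinM mulVf ?gt_eqF// mul1e.
Qed.

Lemma ge0_integralZlT (k : R) (F : T -> \bar R) : (0 <= k)%R ->
  (forall x, 0 <= F x) ->
  \int[mu]_(x in setT) (k%:E * F x) = k%:E * \int[mu]_(x in setT) F x.
Proof.
rewrite le_eqVlt => /orP[/eqP <- _|k0 F0].
  by under eq_integral do rewrite mul0e; rewrite integral0 mul0e.
apply/le_anti; rewrite ge0_integralZlT_le//=.
have kF0 x : 0 <= k%:E * F x by rewrite mule_ge0// lee_fin ltW.
have := @ge0_integralZlT_le k^-1 _ _ kF0; rewrite invr_gt0 => /(_ k0).
under eq_integral do rewrite muleA -EFinM mulVf ?gt_eqF// mul1e.
move=> inv_le; rewrite -(@lee_pmul2l _ k^-1%:E) ?lte_fin ?invr_gt0//.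
by rewrite muleA -EFinM mulVf ?gt_eqF// mul1e.
Qed.

End nonneg_integralT.

Section iterint.
Local Open Scope ereal_scope.
Variable R : realType.

Lemma iterint_ge0 n (h : ('I_n -> R) -> \bar R) : (forall x, 0 <= h x) ->
  0 <= iterint h.
Proof.
elim: n h => [|n IH] h h0 /=; first exact: h0.
by apply: integral_ge0 => x _; apply: IH => w; exact: h0.
Qed.

Lemma le_iterint n (h1 h2 : ('I_n -> R) -> \bar R) : (forall x, 0 <= h1 x) ->
  (forall x, h1 x <= h2 x) -> iterint h1 <= iterint h2.
Proof.
elim: n h1 h2 => [|n IH] h1 h2 h0 h12 /=; first exact: h12.
apply: ge0_le_integralT => x; first by apply: iterint_ge0 => w; exact: h0.
by apply: IH => w; [exact: h0|exact: h12].
Qed.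

Lemma iterintZl n (k : R) (h : ('I_n -> R) -> \bar R) : (0 <= k)%R ->
  (forall x, 0 <= h x) -> iterint (fun x => k%:E * h x) = k%:E * iterint h.
Proof.
elim: n h => [|n IH] h k0 h0 //=.
rewrite -ge0_integralZlT//; last by move=> x; apply: iterint_ge0 => w; exact: h0.
by apply: eq_integral => x _; rewrite IH.
Qed.

End iterint.

Section ball_volume.
Variable R : realType.

Definition itv_ind (c y : R) : R := if `|y| <= c then 1 else 0.

Definition unit_ball_ind n (x : 'I_n -> R) : R := if enorm x <= 1 then 1 else 0.

Lemma itv_ind_ge0 c y : 0 <= itv_ind c y.
Proof. by rewrite /itv_ind; case: ifP. Qed.

Lemma unit_ball_ind_ge0 n (x : 'I_n -> R) : 0 <= unit_ball_ind x.
Proof. by rewrite /unit_ball_ind; case: ifP. Qed.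

Lemma enorm_le1E n (x : 'I_n -> R) : (enorm x <= 1) = (\sum_(i < n) x i ^+ 2 <= 1).
Proof. by rewrite /enorm -{1}sqrtr1 ler_sqrt. Qed.

Lemma integral_itv_ind c : 0 < c ->
  (\int[@lebesgue_measure R]_(x in setT) (itv_ind c x)%:E = (2 * c)%:E)%E.
Proof.
move=> c0; have -> : (fun x => (itv_ind c x)%:E) = (fun x => (\1_`[-c, c] x)%:E).
  apply/funext => x; rewrite indicE /itv_ind.
  case: ifP => H; first by rewrite mem_set//= in_itv/= -ler_norml.
  by rewrite memNset//= in_itv/= -ler_norml H.
rewrite integral_indic//= setIT lebesgue_measure_itv /= lte_fin gtrN//= -EFinD.
by congr (_%:E); ring.
Qed.

Lemma iterint_cube n c : 0 < c ->
  iterint (fun x : 'I_n -> R => (\prod_(i < n) itv_ind c (x i))%:E)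
  = ((2 * c) ^+ n)%:E.
Proof.
move=> c0; elim: n => [|n IH] /=; first by rewrite big_ord0 expr0.
have -> : (fun x => iterint (fun w : 'I_n -> R =>
     (\prod_(i < n.+1) itv_ind c (vcons x w i))%:E)) =
  (fun x => ((itv_ind c x)%:E * ((2 * c) ^+ n)%:E)%E).
  apply/funext => x; rewrite -IH -iterintZl ?itv_ind_ge0//; last first.
    by move=> w; rewrite lee_fin; apply: prodr_ge0 => i _; exact: itv_ind_ge0.
  congr iterint; apply/funext => w.
  rewrite big_ord_recl -EFinM /vcons unlift_none; congr (_ * _)%:E.
  by apply: eq_bigr => i _; rewrite liftK.
under eq_integral do rewrite muleC.
rewrite ge0_integralZlT ?exprn_ge0 ?mulr_ge0 ?ltW// => [|x]; last first.
  by rewrite lee_fin itv_ind_ge0.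
by rewrite integral_itv_ind// -EFinM exprSr.
Qed.

Lemma prod_itv_ind_eq1 n c (x : 'I_n -> R) : (forall i, `|x i| <= c) ->
  \prod_(i < n) itv_ind c (x i) = 1.
Proof. by move=> H; apply: big1 => i _; rewrite /itv_ind H. Qed.

Lemma unit_ball_ind_le_cube n (x : 'I_n -> R) :
  unit_ball_ind x <= \prod_(i < n) itv_ind 1 (x i).
Proof.
rewrite /unit_ball_ind enorm_le1E; case: ifP => H; last first.
  by apply: prodr_ge0 => i _; exact: itv_ind_ge0.
rewrite prod_itv_ind_eq1// => i; move: H; rewrite (bigD1 i)//= => H.
have rest0 : 0 <= \sum_(j < n | j != i) x j ^+ 2 by apply: sumr_ge0 => j _; exact: sqr_ge0.
by rewrite ler_norml; apply/andP; split; nra.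
Qed.

Lemma cube_le_unit_ball_ind n (x : 'I_n -> R) : (0 < n)%N ->
  \prod_(i < n) itv_ind n%:R^-1 (x i) <= unit_ball_ind x.
Proof.
move=> n0; have np : 0 < n%:R :> R by rewrite ltr0n.
have ni0 : 0 <= n%:R^-1 :> R by rewrite invr_ge0 ltW.
have [/forallP xc|] := boolP [forall i, `|x i| <= n%:R^-1]; last first.
  rewrite negb_forall => /existsP[i xi].
  by rewrite (bigD1 i)//= /itv_ind (negbTE xi) mul0r unit_ball_ind_ge0.
rewrite prod_itv_ind_eq1// /unit_ball_ind enorm_le1E ifT//.
apply: (@le_trans _ _ (\sum_(i < n) n%:R^-1 ^+ 2)).
  apply: ler_sum => i _; move: (xc i); rewrite ler_norml => /andP[? ?]; nra.
rewrite sumr_const card_ord -[_ *+ n]mulr_natr.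
have -> : n%:R^-1 ^+ 2 * n%:R = n%:R^-1 :> R by field; rewrite gt_eqF.
by rewrite invr_le1 ?ler1n// unitfE gt_eqF.
Qed.

(* The unit ball lies between the cubes of half-sides [1/n] and [1]. *)
Lemma ball_vol_fin_gt0 n : (0 < n)%N -> exists2 b, ball_vol R n = b%:E & 0 < b.
Proof.
move=> n0; have np : 0 < n%:R :> R by rewrite ltr0n.
have up : (ball_vol R n <= ((2 * 1) ^+ n)%:E)%E.
  rewrite -(iterint_cube n ltr01); apply: le_iterint => x; rewrite lee_fin.
    exact: unit_ball_ind_ge0.
  exact: unit_ball_ind_le_cube.
have lo : (((2 * n%:R^-1) ^+ n)%:E <= ball_vol R n)%E.
  rewrite -iterint_cube ?invr_gt0//; apply: le_iterint => x; rewrite lee_fin.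
    by apply: prodr_ge0 => i _; exact: itv_ind_ge0.
  exact: cube_le_unit_ball_ind.
have lo0 : 0 < (2 * n%:R^-1) ^+ n :> R by rewrite exprn_gt0// mulr_gt0// invr_gt0.
have fin : ball_vol R n \is a fin_num.
  rewrite ge0_fin_numE; last by apply: le_trans lo; rewrite lee_fin ltW.
  exact: le_lt_trans up (ltry _).
exists (fine (ball_vol R n)); first by rewrite fineK.
by rewrite -lte_fin fineK// (lt_le_trans _ lo)// lte_fin.
Qed.

End ball_volume.

Section sphere_integral.
Variable R : realType.

Lemma sum_sqr_radial_le n (r : R) (x : 'I_n -> R) :
  \sum_(i < n) (r * x i / enorm x) ^+ 2 <= r ^+ 2.
Proof.
have -> : \sum_(i < n) (r * x i / enorm x) ^+ 2
          = (r / enorm x) ^+ 2 * \sum_(i < n) x i ^+ 2.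
  by rewrite mulr_sumr; apply: eq_bigr => i _; rewrite -exprMn mulrAC.
rewrite -[\sum_(i < n) _]sqr_sqrtr; last by apply: sumr_ge0 => i _; exact: sqr_ge0.
rewrite -/(enorm x) -exprMn; have [->|e0] := eqVneq (enorm x) 0.
  by rewrite mulr0 expr0n sqr_ge0.
by rewrite divfK.
Qed.

(* [sphere_int] integrates against a probability measure, so it stays
   between the bounds of its integrand on the sphere. *)
Lemma sphere_int_bounds n (r m M : R) (h : ('I_n -> R) -> R) : (0 < n)%N ->
  0 <= m -> (forall v, \sum_(i < n) v i ^+ 2 <= r ^+ 2 -> m <= h v <= M) ->
  exists2 z, sphere_int r h = z%:E & m <= z <= M.
Proof.
move=> n0 m0 hb; have [b bv b0] := ball_vol_fin_gt0 R n0.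
pose H x := (unit_ball_ind x * h (fun i => r * x i / enorm x))%:E.
have bE : ball_vol R n = iterint (fun x : 'I_n -> R => (unit_ball_ind x)%:E) by [].
have hbx x := hb _ (sum_sqr_radial_le r x).
have M0 : 0 <= M.
  by case/andP: (hbx (fun=> 0)) => hm hM; exact: le_trans m0 (le_trans hm hM).
have lo : ((m * b)%:E <= iterint H)%E.
  rewrite EFinM -bv bE -iterintZl//; last by move=> x; rewrite lee_fin unit_ball_ind_ge0.
  apply: le_iterint => x; rewrite -EFinM lee_fin.
    by rewrite mulr_ge0 ?unit_ball_ind_ge0.
  rewrite /unit_ball_ind; case: ifP => _; rewrite ?mulr0 ?mul0r// mulr1 mul1r.
  by case/andP: (hbx x).
have up : (iterint H <= (M * b)%:E)%E.
  rewrite EFinM -bv bE -iterintZl//; last by move=> x; rewrite lee_fin unit_ball_ind_ge0.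
  apply: le_iterint => x; rewrite -?EFinM lee_fin /unit_ball_ind.
    case: ifP => _; rewrite ?mul0r// mul1r.
    by case/andP: (hbx x) => /(le_trans m0).
  case: ifP => _; rewrite ?mulr0 ?mul0r// mulr1 mul1r.
  by case/andP: (hbx x).
have fin : iterint H \is a fin_num.
  rewrite ge0_fin_numE; last by apply: le_trans lo; rewrite lee_fin mulr_ge0 ?(ltW b0).
  exact: le_lt_trans up (ltry _).
exists (fine (iterint H) / b); first by rewrite /sphere_int bv -(fineK fin) -EFinM.
move: lo up; rewrite -(fineK fin) !lee_fin => lo up.
by rewrite ler_pdivlMr// ler_pdivrMr// lo up.
Qed.

End sphere_integral.

Section gaussian_bounds.
Variable R : realType.
Variables (f : R -> R) (a1 a2 C1 C2 : R).
Hypotheses (a1_gt0 : 0 < a1) (a2_gt0 : 0 < a2) (C1_gt0 : 0 < C1) (C2_gt0 : 0 < C2).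
Hypothesis f_bounds : forall v, C1 * expR (- a1 * v ^+ 2) <= f v <= C2 * expR (a2 * v ^+ 2).

Definition tensor_lb N (s : R) : R := C1 ^+ N * expR (- a1 * s).
Definition tensor_ub N (s : R) : R := C2 ^+ N * expR (a2 * s).

Lemma tensor_lb_gt0 N s : 0 < tensor_lb N s.
Proof. by rewrite mulr_gt0 ?exprn_gt0// expR_gt0. Qed.

Lemma prod_f_bounds N (v : 'I_N -> R) s : \sum_(i < N) v i ^+ 2 <= s ->
  tensor_lb N s <= \prod_(i < N) f (v i) <= tensor_ub N s.
Proof.
move=> vs; have e_ge0 a x : 0 <= a -> 0 <= a * expR x by move=> a0; rewrite mulr_ge0 ?expR_ge0.
apply/andP; split.
  apply: (@le_trans _ _ (\prod_(i < N) (C1 * expR (- a1 * v i ^+ 2)))).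
    rewrite big_split /= prodr_const card_ord -expR_sum.
    apply: ler_wpM2l; first by rewrite exprn_ge0 ?ltW.
    by rewrite ler_expR -mulr_sumr !mulNr lerN2; apply: ler_wpM2l; [exact: ltW|exact: vs].
  apply: ler_prod => i _; case/andP: (f_bounds (v i)) => -> _.
  by rewrite andbT e_ge0 ?ltW.
apply: (@le_trans _ _ (\prod_(i < N) (C2 * expR (a2 * v i ^+ 2)))).
  apply: ler_prod => i _; case/andP: (f_bounds (v i)) => lo ->.
  by rewrite andbT (le_trans _ lo) ?e_ge0 ?ltW.
rewrite big_split /= prodr_const card_ord -expR_sum.
apply: ler_wpM2l; first by rewrite exprn_ge0 ?ltW.
by rewrite ler_expR -mulr_sumr; apply: ler_wpM2l; [exact: ltW|exact: vs].
Qed.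

Lemma Zn_bounds N r : (0 < N)%N ->
  exists2 z, Zn N f r = z%:E & tensor_lb N (r ^+ 2) <= z <= tensor_ub N (r ^+ 2).
Proof.
move=> N0; apply: sphere_int_bounds => //; first exact: ltW (tensor_lb_gt0 _ _).
by move=> v; exact: prod_f_bounds.
Qed.

Lemma ln_le_tensor_bounds N s z : 0 <= s ->
  tensor_lb N s <= z <= tensor_ub N s ->
  `|ln z| <= Num.max `|ln C1| `|ln C2| * N%:R + Num.max a1 a2 * s.
Proof.
move=> s0 /andP[lo up]; have z_gt0 := lt_le_trans (tensor_lb_gt0 N s) lo.
have ub_gt0 : 0 < tensor_ub N s by rewrite mulr_gt0 ?exprn_gt0// expR_gt0.
have ln_lb : ln (tensor_lb N s) = ln C1 * N%:R - a1 * s.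
  by rewrite lnM ?posrE ?exprn_gt0 ?expR_gt0// expRK lnXn// mulr_natr mulNr.
have ln_ub : ln (tensor_ub N s) = ln C2 * N%:R + a2 * s.
  by rewrite lnM ?posrE ?exprn_gt0 ?expR_gt0// expRK lnXn// mulr_natr.
have lo' : ln C1 * N%:R - a1 * s <= ln z.
  by rewrite -ln_lb ler_ln ?posrE ?tensor_lb_gt0.
have up' : ln z <= ln C2 * N%:R + a2 * s by rewrite -ln_ub ler_ln ?posrE.
set M1 := Num.max _ _; set M2 := Num.max a1 a2.
have /andP[C1_lb _] : - `|ln C1| <= ln C1 <= `|ln C1| by rewrite -ler_norml.
have /andP[_ C2_ub] : - `|ln C2| <= ln C2 <= `|ln C2| by rewrite -ler_norml.
have m1 : `|ln C1| <= M1 by rewrite le_max lexx.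
have m2 : `|ln C2| <= M1 by rewrite le_max lexx orbT.
have e1 : - M1 * N%:R <= ln C1 * N%:R by rewrite ler_wpM2r//; lra.
have e3 : ln C2 * N%:R <= M1 * N%:R by rewrite ler_wpM2r//; lra.
have e2 : a1 * s <= M2 * s by rewrite ler_wpM2r// le_max lexx.
have e4 : a2 * s <= M2 * s by rewrite ler_wpM2r// le_max lexx orbT.
rewrite ler_norml; apply/andP; split; lra.
Qed.

End gaussian_bounds.

(* At [u = N] the [g]-term of the concentration formula is [g 0 N = (2 pi)^-1/2],
   so [ln Z_N(f, sqrt N)] is exactly [N] times the [N]-th term of [C_F]. *)
Lemma ln_Zn_sqrt (R : realType) (f : R -> R) g lam N z :
  g_concentrated f g lam -> (0 < N)%N ->
  Zn N f (Num.sqrt N%:R) = z%:E -> 0 < z -> ln z = CF_term lam N * N%:R.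
Proof.
move=> [_ [Zeq _ g0 _ _]] N0 Ze z0.
have Np : 0 < N%:R :> R by rewrite ltr0n.
have [b bv b0] := ball_vol_fin_gt0 R N0.
have := Zeq N N%:R N0 Np; rewrite Ze subrr g0 => -[Z_eq].
have area_eq : sphere_area R N = N%:R * b by rewrite /sphere_area bv.
rewrite area_eq in Z_eq *.
set sN := Num.sqrt N%:R in Z_eq *; set P := N%:R `^ _ in Z_eq *.
set c := (Num.sqrt (2 * pi))^-1 in Z_eq *.
have sN0 : 0 < sN by rewrite sqrtr_gt0.
have P0 : 0 < P by rewrite powR_gt0.
have ln_sN : ln sN * 2 = ln N%:R.
  by rewrite -[in RHS](sqr_sqrtr (ler0n _ N)) expr2 lnM ?posrE//; ring.
have num_eq : 2 * c + 2 * lam N N%:R = z * (sN * (N%:R * b * P)).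
  have den_neq0 : sN * (N%:R * b) * P != 0 by rewrite gt_eqF// !mulr_gt0.
  by rewrite [sN * _]mulrA Z_eq mulrAC divfK// mulrDr.
rewrite /CF_term -/c num_eq area_eq -/sN -/P.
rewrite lnM ?posrE ?mulr_gt0// (@lnM _ sN) ?posrE ?mulr_gt0// -ln_sN.
by field; rewrite gt_eqF.
Qed.

Section log_scalability.
Variable R : realType.
Variables (f : R -> R) (g : R -> nat -> R) (lam : nat -> R -> R) (a1 a2 C1 C2 : R).
Hypothesis f_conc : g_concentrated f g lam.
Hypotheses (a1_gt0 : 0 < a1) (a2_gt0 : 0 < a2) (C1_gt0 : 0 < C1) (C2_gt0 : 0 < C2).
Hypothesis f_bounds : forall v, C1 * expR (- a1 * v ^+ 2) <= f v <= C2 * expR (a2 * v ^+ 2).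

Local Notation K := (Num.max `|ln C1| `|ln C2| + Num.max a1 a2).

Lemma ln_le_tensor_boundsN N z :
  tensor_lb a1 C1 N N%:R <= z <= tensor_ub a2 C2 N N%:R -> `|ln z| <= K * N%:R.
Proof. by move=> /(ln_le_tensor_bounds C1_gt0 C2_gt0 (ler0n _ N)); rewrite mulrDl. Qed.

Lemma Zn_sqrt_spec N : (0 < N)%N -> exists2 z, Zn N f (Num.sqrt N%:R) = z%:E &
  [/\ 0 < z, `|ln z| <= K * N%:R & `|ln z| = `|CF_term lam N| * N%:R].
Proof.
move=> N0; have [z Ze zb] :=
  Zn_bounds a1_gt0 a2_gt0 C1_gt0 C2_gt0 f_bounds (Num.sqrt N%:R) N0.
move: zb; rewrite sqr_sqrtr ?ler0n // => zb; have /andP[z_lb _] := zb.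
have z_gt0 := lt_le_trans (tensor_lb_gt0 a1 C1_gt0 N N%:R) z_lb.
exists z => //; split; [by []|exact: ln_le_tensor_boundsN|].
by rewrite (ln_Zn_sqrt f_conc N0 Ze z_gt0) normrM [`|N%:R|]ger0_norm.
Qed.

Lemma CF_term_le N : (0 < N)%N -> `|CF_term lam N| <= K.
Proof.
move=> N0; have [z _ [_ ln_le ln_eq]] := Zn_sqrt_spec N0.
by move: ln_le; rewrite ln_eq ler_pM2r ?ltr0n.
Qed.

Lemma CF_set_bounded : has_ubound (CF_set lam).
Proof. by exists K => _ [N N0 <-]; exact: CF_term_le. Qed.

Lemma CF_term_le_sup N : (0 < N)%N -> `|CF_term lam N| <= sup (CF_set lam).
Proof. by move=> N0; apply: (ub_le_sup CF_set_bounded); exists N. Qed.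

Lemma ln_cond_tensor_le N (v : 'I_N -> R) : (0 < N)%N ->
  \sum_(i < N) v i ^+ 2 = N%:R ->
  `|ln (cond_tensor f v)| <= (K + sup (CF_set lam)) * N%:R.
Proof.
move=> N0 vN; have [z Ze [z_gt0 _ ln_eq]] := Zn_sqrt_spec N0.
have /(prod_f_bounds a1_gt0 a2_gt0 C1_gt0 C2_gt0 f_bounds) Pb :
  \sum_(i < N) v i ^+ 2 <= N%:R by rewrite vN.
have P_gt0 := lt_le_trans (tensor_lb_gt0 a1 C1_gt0 N N%:R) (proj1 (andP Pb)).
rewrite /cond_tensor Ze /= ln_div ?posrE//.
apply: le_trans (ler_normB _ _) _; rewrite mulrDl lerD ?ln_le_tensor_boundsN//.
by rewrite ln_eq ler_wpM2r ?CF_term_le_sup.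
Qed.

Lemma log_scalable_const_gt0 : 0 < K + sup (CF_set lam).
Proof.
have sup_ge0 := le_trans (normr_ge0 _) (CF_term_le_sup (ltn0Sn 0)).
have a1_le : a1 <= Num.max a1 a2 by rewrite le_max lexx.
have lnC_ge0 : 0 <= Num.max `|ln C1| `|ln C2| by rewrite le_max normr_ge0.
by rewrite ltr_wpDr // ltr_wpDl // (lt_le_trans a1_gt0).
Qed.

End log_scalability.

Theorem theorem3p4 (R : realType) (f : R -> R) (g : R -> nat -> R)
  (lam : nat -> R -> R) (a1 a2 C1 C2 : R) :
  prob_density_unit2 f ->
  g_concentrated f g lam ->
  0 < a1 -> 0 < a2 -> 0 < C1 -> 0 < C2 ->
  (forall v, C1 * expR (- a1 * v ^+ 2) <= f v <= C2 * expR (a2 * v ^+ 2)) ->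
  has_ubound (CF_set lam) /\
  log_scalable (cond_tensor f)
    (Num.max `|ln C1| `|ln C2| + Num.max a1 a2 + sup (CF_set lam)).
Proof.
move=> _ f_conc a1_gt0 a2_gt0 C1_gt0 C2_gt0 f_bounds.
split; first exact: CF_set_bounded f_conc a1_gt0 a2_gt0 C1_gt0 C2_gt0 f_bounds.
split; first exact: log_scalable_const_gt0 f_conc a1_gt0 a2_gt0 C1_gt0 C2_gt0 f_bounds.
by move=> N v; apply: (ln_cond_tensor_le f_conc a1_gt0 a2_gt0 C1_gt0 C2_gt0 f_bounds).
Qed.
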